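(* Let $q$ be a prime power. The nilpotent graph $\Gamma_{\mathfrak{N}}(\mathfrak{t}(2,\mathbb{F}_q))$ has exactly $q+1$ connected components, and each of them is a complete graph $K_{q(q-1)}$.
   Context: $\mathfrak{t}(2,\mathbb{F}_q)$ is the Lie algebra of $2\times 2$ upper triangular matrices over $\mathbb{F}_q$ with bracket $[x,y]=xy-yx$. $\langle a,b\rangle$ denotes the Lie subalgebra generated by $a,b$, and $\mathrm{nil}(L)=\{x\in L\mid \langle h,x\rangle \text{ is nilpotent for all } h\in L\}$. For a finite-dimensional non-nilpotent Lie algebra $L$, the nilpotent graph $\Gamma_{\mathfrak{N}}(L)$ is the simple undirected graph with vertex set $L\setminus\mathrm{nil}(L)$ in which distinct vertices $x,y$ are adjacent iff $\langle x,y\rangle$ is nilpotent. *)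

From HB Require Import structures.
From mathcomp Require Import all_boot all_order all_algebra all_field.
From mathcomp Require Import boolp.
Set Implicit Arguments. Unset Strict Implicit. Unset Printing Implicit Defensive.
Import GRing.Theory.
Local Open Scope ring_scope.

Section TriangularLie.
Variable F : finFieldType.
Notation M := 'M[F]_2.

Definition lieb (x y : M) : M := x *m y - y *m x.

Definition t2 : {set M} := [set A : M | A ord_max ord0 == 0].

Definition lin_closed (A : {set M}) : bool :=
  (0 \in A) && [forall x in A, forall y in A, forall a : F, a *: x + y \in A].
Definition lie_closed (A : {set M}) : bool :=
  lin_closed A && [forall x in A, forall y in A, lieb x y \in A].

Definition span (S : {set M}) : {set M} :=
  \bigcap_(A | lin_closed A && (S \subset A)) A.
Definition lie_gen (S : {set M}) : {set M} :=
  \bigcap_(A | lie_closed A && (S \subset A)) A.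

Fixpoint lcs (A : {set M}) (k : nat) : {set M} :=
  match k with
  | 0 => A
  | k'.+1 => span [set lieb x y | x in A, y in lcs A k']
  end.

Definition lie_nilpotent (A : {set M}) : Prop :=
  exists k, lcs A k \subset [set 0].
Definition lie_nilpotentb (A : {set M}) : bool := `[< lie_nilpotent A >].

Definition nil_pair (a b : M) : bool := lie_nilpotentb (lie_gen [set a; b]).

Definition nilL : {set M} := [set x in t2 | [forall h in t2, nil_pair h x]].

Definition nil_vertices : {set M} := t2 :\: nilL.
Definition nil_adj : rel M := fun x y =>
  [&& x \in nil_vertices, y \in nil_vertices, x != y & nil_pair x y].

Definition nil_components : {set {set M}} :=
  [set [set y in nil_vertices | connect nil_adj x y] | x in nil_vertices].

End TriangularLie.

From Pilot Require Import Defs.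
From HB Require Import structures.
From mathcomp Require Import all_boot all_order all_algebra all_field.
From mathcomp Require Import boolp ring.
Set Implicit Arguments. Unset Strict Implicit. Unset Printing Implicit Defensive.
Import GRing.Theory.
Local Open Scope ring_scope.

(* For x, y in t(2,F) the bracket is [x,y] = d(x,y) e12, where d(x,y) is the
   determinant of the vectors phi(x) = (x11 - x22, x12) and phi(y).  If
   d(x,y) <> 0, then e12 lies in <x,y> and is scaled by ad h for some h in
   <x,y> with nonzero diagonal gap, so <x,y> is not nilpotent; if d(x,y) = 0,
   x and y lie in the abelian centralizer of a noncentral element.  Hence
   nil(t(2,F)) = ker phi, and two vertices are adjacent iff their phi-vectors
   are proportional: the components correspond to the q + 1 lines of F^2
   through the origin, and each is a clique of size q(q - 1), parametrized by
   the lower-right entry and a nonzero scalar. *)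

Lemma det2_trans (R : idomainType) (u1 u2 a1 a2 b1 b2 : R) :
  (u1 != 0) || (u2 != 0) ->
  u1 * a2 - a1 * u2 = 0 -> u1 * b2 - b1 * u2 = 0 -> a1 * b2 - b1 * a2 = 0.
Proof.
move=> /orP[] u_neq0 ha hb; apply: (mulfI u_neq0); rewrite mulr0.
- have -> : u1 * (a1 * b2 - b1 * a2)
      = a1 * (u1 * b2 - b1 * u2) - b1 * (u1 * a2 - a1 * u2) by ring.
  by rewrite ha hb !mulr0 subr0.
- have -> : u2 * (a1 * b2 - b1 * a2)
      = a2 * (u1 * b2 - b1 * u2) - b2 * (u1 * a2 - a1 * u2) by ring.
  by rewrite ha hb !mulr0 subr0.
Qed.

Lemma det2_eq0_proportional (R : fieldType) (u1 u2 a1 a2 : R) :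
  (u1 != 0) || (u2 != 0) -> u1 * a2 - a1 * u2 = 0 ->
  exists c, a1 = c * u1 /\ a2 = c * u2.
Proof.
move=> u_neq0 /eqP; rewrite subr_eq0 => /eqP h.
case/orP: u_neq0 => u_neq0.
- exists (a1 / u1); split; first by rewrite mulfVK.
  by rewrite mulrAC -h mulrC mulKf.
- exists (a2 / u2); split; last by rewrite mulfVK.
  by rewrite mulrAC [a2 * _]mulrC h mulfK.
Qed.

Section TriangularLie.
Variable F : finFieldType.
Notation M := 'M[F]_2.
Notation i0 := (@ord0 1).
Notation i1 := (@ord_max 1).

Lemma ord2P (i : 'I_2) : i = i0 \/ i = i1.
Proof. by case: i => [[|[|//]] lti]; [left|right]; apply: val_inj. Qed.

Definition diag_diff (x : M) : F := x i0 i0 - x i1 i1.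
Definition e12 : M := delta_mx i0 i1.
Definition lieb_coef (x y : M) : F := diag_diff x * y i0 i1 - diag_diff y * x i0 i1.
Definition noncentral (x : M) : bool := (diag_diff x != 0) || (x i0 i1 != 0).

Lemma t2P (x : M) : reflect (x i1 i0 = 0) (x \in t2 F).
Proof. by rewrite inE; apply: eqP. Qed.

Lemma lieb_t2 (x y : M) : x \in t2 F -> y \in t2 F -> lieb x y = lieb_coef x y *: e12.
Proof.
move=> /t2P x10 /t2P y10; apply/matrixP => i j.
rewrite /lieb /lieb_coef /diag_diff !mxE !big_ord_recl !big_ord0 !addr0.
have -> : lift i0 (@ord0 0) = i1 by apply: val_inj.
by case: (ord2P i) => ->; case: (ord2P j) => -> /=; rewrite ?x10 ?y10; ring.
Qed.

Lemma t2_lin (a : F) (x y : M) : x \in t2 F -> y \in t2 F -> a *: x + y \in t2 F.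
Proof. by move=> /t2P x10 /t2P y10; apply/t2P; rewrite !mxE x10 y10 mulr0 addr0. Qed.

Lemma scale_e12_t2 (c : F) : c *: e12 \in t2 F.
Proof. by apply/t2P; rewrite !mxE mulr0. Qed.

Lemma scale_e12_eq0 (c : F) : (c *: e12 == 0) = (c == 0).
Proof.
apply/eqP/eqP => [/matrixP/(_ i0 i1)|->]; last by rewrite scale0r.
by rewrite !mxE /= mulr1.
Qed.

Lemma lieb_coef_scale_e12 (h : M) (c : F) : lieb_coef h (c *: e12) = diag_diff h * c.
Proof. rewrite /lieb_coef /diag_diff !mxE /=; ring. Qed.

Lemma lieb_coef_e11 (x : M) : lieb_coef (delta_mx i0 i0) x = x i0 i1.
Proof. rewrite /lieb_coef /diag_diff !mxE /=; ring. Qed.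

Lemma lieb_coef_e12 (x : M) : lieb_coef e12 x = - diag_diff x.
Proof. rewrite /lieb_coef /diag_diff !mxE /=; ring. Qed.

Lemma lieb_coef_lin (u x y : M) a :
  lieb_coef u (a *: x + y) = a * lieb_coef u x + lieb_coef u y.
Proof. rewrite /lieb_coef /diag_diff !mxE; ring. Qed.

Lemma lieb_coefC (x y : M) : lieb_coef y x = - lieb_coef x y.
Proof. rewrite /lieb_coef; ring. Qed.

Lemma lieb_coefxx (x : M) : lieb_coef x x = 0.
Proof. rewrite /lieb_coef; ring. Qed.

Lemma lieb_coef_trans (w x y : M) : noncentral w ->
  lieb_coef w x = 0 -> lieb_coef w y = 0 -> lieb_coef x y = 0.
Proof. exact: det2_trans. Qed.

Lemma lin_closedI (A : {set M}) : 0 \in A ->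
  (forall a x y, x \in A -> y \in A -> a *: x + y \in A) -> lin_closed A.
Proof.
move=> A0 Alin; rewrite /lin_closed A0; apply/forall_inP => x xA.
by apply/forall_inP => y yA; apply/forallP => a; apply: Alin.
Qed.

Lemma lie_closedI (A : {set M}) : 0 \in A ->
  (forall a x y, x \in A -> y \in A -> a *: x + y \in A) ->
  (forall x y, x \in A -> y \in A -> lieb x y \in A) -> lie_closed A.
Proof.
move=> A0 Alin Alieb; rewrite /lie_closed lin_closedI //=.
by apply/forall_inP => x xA; apply/forall_inP => y yA; apply: Alieb.
Qed.

Lemma lie_closed_lieb (A : {set M}) x y : lie_closed A ->
  x \in A -> y \in A -> lieb x y \in A.
Proof. by case/andP=> _ /forall_inP Alieb xA yA; move/forall_inP: (Alieb x xA); apply. Qed.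

Lemma lin_closed0 : lin_closed [set 0 : M].
Proof.
by apply: lin_closedI => [|a x y]; rewrite ?inE // => /eqP-> /eqP->; rewrite scaler0 addr0.
Qed.

Lemma span_min (S B : {set M}) : lin_closed B -> S \subset B -> Defs.span S \subset B.
Proof. by move=> lcB sSB; apply: bigcap_inf; rewrite lcB sSB. Qed.

Lemma sub_span (S : {set M}) : S \subset Defs.span S.
Proof. by apply/subsetP => x xS; apply/bigcapP => A /andP[_ /subsetP]; apply. Qed.

Lemma lie_gen_min (S B : {set M}) : lie_closed B -> S \subset B -> lie_gen S \subset B.
Proof. by move=> lcB sSB; apply: bigcap_inf; rewrite lcB sSB. Qed.

Lemma sub_lie_gen (S : {set M}) : S \subset lie_gen S.
Proof. by apply/subsetP => x xS; apply/bigcapP => A /andP[_ /subsetP]; apply. Qed.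

Lemma lie_gen_lieb (S : {set M}) x y : x \in lie_gen S -> y \in lie_gen S ->
  lieb x y \in lie_gen S.
Proof.
move=> /bigcapP xS /bigcapP yS; apply/bigcapP => A /[dup] /andP[lcA _] SA.
exact: lie_closed_lieb lcA (xS A SA) (yS A SA).
Qed.

Lemma abelian_lie_nilpotent (A : {set M}) :
  (forall x y, x \in A -> y \in A -> lieb x y = 0) -> lie_nilpotent A.
Proof.
move=> Aab; exists 1%N; apply: span_min; first exact: lin_closed0.
by apply/subsetP => _ /imset2P[x y xA yA ->]; rewrite inE Aab.
Qed.

(* [ad h] acts on the line [F e12] by the nonzero scalar [diag_diff h], so that
   line survives in every term of the lower central series. *)
Lemma lcs_scale_e12 (A : {set M}) h c : A \subset t2 F ->
  h \in A -> diag_diff h != 0 -> c != 0 -> c *: e12 \in A ->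
  forall n, exists2 c', c' != 0 & c' *: e12 \in lcs A n.
Proof.
move=> At hA hd c_neq0 cA; elim=> [|n [c' c'_neq0 c'A]]; first by exists c.
exists (diag_diff h * c'); first by rewrite mulf_neq0.
rewrite /= -lieb_coef_scale_e12 -lieb_t2 ?scale_e12_t2 ?(subsetP At) //.
by apply: (subsetP (sub_span _)); apply: imset2_f.
Qed.

Lemma not_lie_nilpotent (A : {set M}) h c : A \subset t2 F ->
  h \in A -> diag_diff h != 0 -> c != 0 -> c *: e12 \in A -> ~ lie_nilpotent A.
Proof.
move=> At hA hd c_neq0 cA [n /subsetP An0].
have [c' c'_neq0 /An0] := lcs_scale_e12 At hA hd c_neq0 cA n.
by rewrite inE scale_e12_eq0 (negbTE c'_neq0).
Qed.

Lemma t2_lie_closed : lie_closed (t2 F).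
Proof.
apply: lie_closedI => [|a x y|x y xt yt]; first by apply/t2P; rewrite mxE.
  exact: t2_lin.
by rewrite lieb_t2 ?scale_e12_t2.
Qed.

Definition cent_t2 (u : M) : {set M} := [set z in t2 F | lieb_coef u z == 0].

Lemma cent_t2P u z : reflect (z \in t2 F /\ lieb_coef u z = 0) (z \in cent_t2 u).
Proof. by rewrite /cent_t2 in_set; apply: (iffP andP) => -[-> /eqP]. Qed.

Lemma cent_t2_abelian u x y : noncentral u -> x \in cent_t2 u -> y \in cent_t2 u ->
  lieb x y = 0.
Proof.
move=> nu /cent_t2P[xt ux] /cent_t2P[yt uy].
by rewrite lieb_t2 // (lieb_coef_trans nu ux uy) scale0r.
Qed.

Lemma cent_t2_0 u : 0 \in cent_t2 u.
Proof. by apply/cent_t2P; split; [apply/t2P|rewrite /lieb_coef /diag_diff]; rewrite !mxE; ring. Qed.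

Lemma cent_t2_lie_closed u : noncentral u -> lie_closed (cent_t2 u).
Proof.
move=> nu; apply: lie_closedI => [|a x y|x y xu yu]; first exact: cent_t2_0.
- move=> /cent_t2P[xt ux] /cent_t2P[yt uy]; apply/cent_t2P; split; first exact: t2_lin.
  by rewrite lieb_coef_lin ux uy mulr0 addr0.
- by rewrite (cent_t2_abelian nu xu yu) cent_t2_0.
Qed.

Lemma noncentral_e12 : noncentral e12.
Proof. by rewrite /noncentral mxE /= oner_eq0 orbT. Qed.

Lemma exists_noncentral_cent x y : lieb_coef x y = 0 ->
  x \in t2 F -> y \in t2 F -> exists2 u, noncentral u & [set x; y] \subset cent_t2 u.
Proof.
move=> xy xt yt.
have cent_pair u : lieb_coef u x = 0 -> lieb_coef u y = 0 -> [set x; y] \subset cent_t2 u.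
  by move=> ux uy; apply/subsetP => z; rewrite in_set2 => /orP[]/eqP->; apply/cent_t2P.
have [nx|cx] := boolP (noncentral x).
  by exists x => //; apply: cent_pair; rewrite ?lieb_coefxx.
have [ny|cy] := boolP (noncentral y).
  by exists y => //; apply: cent_pair; rewrite ?lieb_coefxx // lieb_coefC xy oppr0.
exists e12; first exact: noncentral_e12.
move: cx cy; rewrite /noncentral !negb_or !negbK => /andP[/eqP dx _] /andP[/eqP dy _].
by apply: cent_pair; rewrite lieb_coef_e12 ?dx ?dy oppr0.
Qed.

Lemma nil_pairE x y : x \in t2 F -> y \in t2 F -> nil_pair x y = (lieb_coef x y == 0).
Proof.
move=> xt yt; rewrite /nil_pair /lie_nilpotentb; apply/asboolP/eqP => [nilL|xy].
  apply/eqP; apply: contraT => xy_neq0.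
  set L := lie_gen [set x; y].
  have [xL yL] : x \in L /\ y \in L.
    by split; apply: (subsetP (sub_lie_gen _)); rewrite in_set2 eqxx ?orbT.
  have Lt : L \subset t2 F.
    apply: lie_gen_min t2_lie_closed _.
    by apply/subsetP => z; rewrite in_set2 => /orP[]/eqP->.
  have [h hL hd] : exists2 h, h \in L & diag_diff h != 0.
    have [dx|dx] := eqVneq (diag_diff x) 0; last by exists x.
    have [dy|dy] := eqVneq (diag_diff y) 0; last by exists y.
    by move: xy_neq0; rewrite /lieb_coef dx dy !mul0r subrr eqxx.
  have xyL : lieb_coef x y *: e12 \in L by rewrite -lieb_t2 //; apply: lie_gen_lieb.
  by case: (not_lie_nilpotent Lt hL hd xy_neq0 xyL).
have [u nu xyu] := exists_noncentral_cent xy xt yt.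
have Lu := lie_gen_min (cent_t2_lie_closed nu) xyu.
apply: abelian_lie_nilpotent => a b aL bL.
exact: cent_t2_abelian nu (subsetP Lu a aL) (subsetP Lu b bL).
Qed.

Lemma noncentral_witness x : noncentral x -> exists2 h, h \in t2 F & lieb_coef h x != 0.
Proof.
have [x01 nx|x01 _] := eqVneq (x i0 i1) 0; last first.
  by exists (delta_mx i0 i0); rewrite ?lieb_coef_e11 //; apply/t2P; rewrite mxE.
exists e12; first by apply/t2P; rewrite mxE.
by rewrite lieb_coef_e12 oppr_eq0; move: nx; rewrite /noncentral x01 eqxx orbF.
Qed.

Lemma nil_verticesE x : (x \in nil_vertices F) = (x \in t2 F) && noncentral x.
Proof.
rewrite /nil_vertices /nilL in_setD in_set.
case xt: (x \in t2 F); rewrite ?andbF //= andbT.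
apply/idP/idP => [xc|nx]; last first.
  by apply/forall_inP => xc; have [h ht] := noncentral_witness nx; rewrite -nil_pairE // xc.
apply: contraR xc => cx; apply/forall_inP => h ht; rewrite nil_pairE //.
move: cx; rewrite /noncentral negb_or !negbK => /andP[/eqP dx /eqP x01].
by rewrite /lieb_coef dx x01 mulr0 mul0r subrr.
Qed.

Lemma nil_adjE x y : nil_adj x y =
  [&& x \in nil_vertices F, y \in nil_vertices F, x != y & lieb_coef x y == 0].
Proof.
rewrite /nil_adj; case xV: (x \in nil_vertices F) => //=.
case yV: (y \in nil_vertices F) => //=.
by move: xV yV; rewrite !nil_verticesE => /andP[xt _] /andP[yt _]; rewrite nil_pairE.
Qed.

Definition nil_class (x : M) : {set M} :=
  [set y in nil_vertices F | lieb_coef x y == 0].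

Lemma nil_classP x y :
  reflect (y \in nil_vertices F /\ lieb_coef x y = 0) (y \in nil_class x).
Proof. by rewrite /nil_class in_set; apply: (iffP andP) => -[-> /eqP]. Qed.

Lemma nil_class_id x : x \in nil_vertices F -> x \in nil_class x.
Proof. by move=> xV; apply/nil_classP; rewrite lieb_coefxx. Qed.

Lemma nil_class_eq x y : x \in nil_vertices F -> y \in nil_class x ->
  nil_class x = nil_class y.
Proof.
rewrite nil_verticesE => /andP[_ nx] /nil_classP[yV xy].
have ny : noncentral y by move: yV; rewrite nil_verticesE => /andP[].
apply/setP => z; apply/nil_classP/nil_classP => -[zV xz]; split => //.
  exact: lieb_coef_trans nx xy xz.
by apply: lieb_coef_trans ny _ xz; rewrite lieb_coefC xy oppr0.
Qed.

Lemma mem_nil_class x y : x \in nil_vertices F -> y \in nil_vertices F ->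
  (y \in nil_class x) = (nil_class x == nil_class y).
Proof.
move=> xV yV; apply/idP/eqP => [|->]; last exact: nil_class_id.
exact: nil_class_eq.
Qed.

Lemma connect_nil_adjE x y : x \in nil_vertices F -> y \in nil_vertices F ->
  connect (@nil_adj F) x y = (y \in nil_class x).
Proof.
move=> xV yV; apply/idP/idP => [xy|].
  have cl : closed (@nil_adj F) (mem (nil_class x)).
    move=> u v; rewrite nil_adjE => /and4P[uV vV _ uv].
    rewrite !mem_nil_class // (@nil_class_eq u v) //.
    by apply/nil_classP; split=> //; apply/eqP.
  by rewrite -(closed_connect cl xy) nil_class_id.
have [<- _|x_neq_y /nil_classP[_ /eqP xy]] := eqVneq x y; first exact: connect0.
by apply: connect1; rewrite nil_adjE xV yV x_neq_y.
Qed.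

Lemma nil_componentsE : nil_components F = nil_class @: nil_vertices F.
Proof.
apply: eq_in_imset => x xV; apply/setP => y; rewrite in_set.
have [yV|yV] := boolP (y \in nil_vertices F); first by rewrite connect_nil_adjE.
by apply/esym/negbTE; apply: contra yV => /nil_classP[].
Qed.

Lemma nil_class_complete x y z : z \in nil_vertices F ->
  x \in nil_class z -> y \in nil_class z -> x != y -> nil_adj x y.
Proof.
move=> zV /nil_classP[xV zx] /nil_classP[yV zy] x_neq_y.
have nz : noncentral z by move: zV; rewrite nil_verticesE => /andP[].
by rewrite nil_adjE xV yV x_neq_y (lieb_coef_trans nz zx zy) eqxx.
Qed.

Definition class_param (x : M) (p : F * F) : M := p.2 *: (x - (x i1 i1)%:M) + p.1%:M.

Lemma class_paramE x p : x \in t2 F ->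
  [/\ class_param x p i0 i0 = p.2 * diag_diff x + p.1,
      class_param x p i0 i1 = p.2 * x i0 i1,
      class_param x p i1 i0 = 0 & class_param x p i1 i1 = p.1].
Proof. by move=> /t2P x10; rewrite /diag_diff !mxE /= x10; split; ring. Qed.

Lemma nil_class_param x : x \in nil_vertices F ->
  nil_class x = class_param x @: setX [set: F] [set~ 0].
Proof.
rewrite nil_verticesE => /andP[xt nx]; apply/setP => y.
apply/nil_classP/imsetP => [[]|[[t c]]].
  rewrite nil_verticesE => /andP[yt ny] xy.
  have [c [dy y01]] := det2_eq0_proportional nx xy.
  exists (y i1 i1, c).
    rewrite !inE /=; apply: contraTneq ny => c0.
    by rewrite /noncentral dy y01 c0 !mul0r eqxx.
  have [e00 e01 e10 e11] := class_paramE (y i1 i1, c) xt.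
  apply/matrixP => i j; case: (ord2P i) => ->; case: (ord2P j) => ->;
    rewrite ?e00 ?e01 ?e10 ?e11 //=; last exact/t2P.
  by rewrite -dy /diag_diff subrK.
rewrite in_setX in_setC1 => /andP[_ c_neq0] ->.
have [e00 e01 e10 e11] := class_paramE (t, c) xt.
have dd_param : diag_diff (class_param x (t, c)) = c * diag_diff x.
  by rewrite /diag_diff e00 e11 /= addrK.
split; last by rewrite /lieb_coef dd_param e01 /=; ring.
rewrite nil_verticesE /noncentral dd_param e01 /= !mulf_eq0 (negbTE c_neq0) /=.
by rewrite [_ || _]nx andbT; apply/t2P; rewrite e10.
Qed.

Lemma card_nil_class x : x \in nil_vertices F ->
  #|nil_class x| = (#|F| * (#|F| - 1))%N.
Proof.
move=> xV; rewrite nil_class_param // card_in_imset ?cardsX ?cardsT ?cardsC1 ?subn1 //.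
move: xV; rewrite nil_verticesE => /andP[xt nx].
move=> [t c] [t' c']; rewrite !inE /= => c_neq0 c'_neq0 eq_param.
have /= [e00 e01 _ e11] := class_paramE (t, c) xt.
have /= [f00 f01 _ f11] := class_paramE (t', c') xt.
have tt' : t = t' by rewrite -e11 eq_param f11.
have dd_eq : c * diag_diff x = c' * diag_diff x by apply: (addIr t); rewrite -e00 eq_param f00 tt'.
have x01_eq : c * x i0 i1 = c' * x i0 i1 by rewrite -e01 eq_param f01.
by rewrite tt'; congr (_, _); case/orP: nx => nx; apply: (mulIf nx).
Qed.

(* [phi (line_rep o)] is (1, s) for [o = Some s] and (0, 1) for [o = None]:
   one point on each line of F^2 through the origin. *)
Definition line_rep (o : option F) : M :=
  if o is Some s then delta_mx i0 i0 + s *: e12 else e12.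

Lemma lieb_coef_line_rep o x : lieb_coef (line_rep o) x =
  if o is Some s then x i0 i1 - s * diag_diff x else - diag_diff x.
Proof. by case: o => [s|]; rewrite ?lieb_coef_e12 // /lieb_coef /diag_diff !mxE /=; ring. Qed.

Lemma line_rep_vertex o : line_rep o \in nil_vertices F.
Proof.
rewrite nil_verticesE; apply/andP; split.
  by case: o => [s|]; apply/t2P; rewrite !mxE /= ?mulr0 ?addr0.
rewrite /noncentral /diag_diff; case: o => [s|]; rewrite !mxE /=.
  by rewrite !mulr0 !addr0 subr0 oner_eq0.
by rewrite oner_eq0 orbT.
Qed.

Lemma nil_class_line_rep_inj : injective (nil_class \o line_rep).
Proof.
move=> o o' /= eq_class.
have /nil_classP[_] : line_rep o' \in nil_class (line_rep o).
  by rewrite eq_class nil_class_id ?line_rep_vertex.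
rewrite lieb_coef_line_rep /diag_diff.
case: o o' {eq_class} => [s|] [s'|] //=; rewrite !mxE /= ?subrr ?mulr0 ?addr0 ?add0r ?subr0 ?mulr1.
- by move/eqP; rewrite subr_eq0 => /eqP->.
- by move/eqP; rewrite oner_eq0.
- by move/eqP; rewrite oppr_eq0 oner_eq0.
Qed.

Lemma nil_class_line_rep x : x \in nil_vertices F ->
  exists o, nil_class x = nil_class (line_rep o).
Proof.
move=> xV; exists (if diag_diff x != 0 then Some (x i0 i1 / diag_diff x) else None).
apply: nil_class_eq xV _; apply/nil_classP; split; first exact: line_rep_vertex.
apply/eqP; rewrite lieb_coefC oppr_eq0 lieb_coef_line_rep.
have [dx|dx] := eqVneq (diag_diff x) 0; first by rewrite dx oppr0.
by rewrite /= mulfVK // subrr.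
Qed.

Lemma nil_classes_line_rep :
  nil_class @: nil_vertices F = (nil_class \o line_rep) @: [set: option F].
Proof.
apply/setP => C; apply/imsetP/imsetP => [[x xV ->]|[o _ ->]].
  by have [o ->] := nil_class_line_rep xV; exists o.
by exists (line_rep o); rewrite ?line_rep_vertex.
Qed.

End TriangularLie.

Theorem theorem4p6 (F : finFieldType) :
  #|nil_components F| = #|F|.+1 /\
  (forall C, C \in nil_components F ->
     #|C| = (#|F| * (#|F| - 1))%N /\
     (forall x y, x \in C -> y \in C -> x != y -> nil_adj x y)).
Proof.
rewrite nil_componentsE; split.
  rewrite nil_classes_line_rep card_imset ?cardsT ?card_option //.
  exact: nil_class_line_rep_inj.
move=> _ /imsetP[z zV ->]; split; first exact: card_nil_class.
by move=> x y; apply: nil_class_complete.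
Qed.
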